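(* Let $\mathscr Q_n$ be a non-singular quadric in $\mathrm{PG}(n,2)$ of projective index $g\geq 1$, with point-graph $\Gamma$. For each integer $s$ with $0\leq s<g$, let $\Gamma_s$ be the graph obtained from $\Gamma$ by the Godsil–McKay switching with respect to the partition $\{\mathcal X_s,\mathcal Y_s\}$ (defined below). Then $\{\mathcal X_s,\mathcal Y_s\}$ is a Godsil–McKay partition of $\Gamma$, and $\Gamma_s$ is a strongly regular graph with the same parameters as $\Gamma$.
   Context: A non-singular quadric $\mathscr Q_n$ in $\mathrm{PG}(n,q)$ is the point set of a non-degenerate quadric. Its projective index $g$ is the largest dimension of a projective subspace contained in $\mathscr Q_n$; the $g$-dimensional subspaces contained in $\mathscr Q_n$ are its generators. If $n=2r$, $\mathscr Q_n$ is the parabolic quadric $\mathcal P_{2r}$ with $g=r-1$; if $n=2r+1$, it is either the elliptic quadric $\mathcal E_{2r+1}$ with $g=r-1$ or the hyperbolic quadric $\mathcal H_{2r+1}$ with $g=r$. The point-graph $\Gamma$ of $\mathscr Q_n$ has vertex set the points of $\mathscr Q_n$, two distinct points being adjacent iff the line joining them is contained in $\mathscr Q_n$. Fix an integer $s$ with $0\le s<g$ and an $s$-dimensional subspace $\alpha_s$ contained in $\mathscr Q_n$. A point $X$ of $\mathscr Q_n$ has type (i) if $X\in\alpha_s$; type (ii) if $X\notin\alpha_s$ and the $(s+1)$-space $\langle \alpha_s,X\rangle$ is contained in $\mathscr Q_n$; type (iii) otherwise. $\mathcal X_s$ is the set of type (ii) points, $\mathcal Y_s$ the set of points of type (i) or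 (iii). A Godsil–McKay partition of a graph is a partition $\{\mathcal X,\mathcal Y\}$ of its vertices such that $\mathcal X$ induces a regular subgraph and each vertex of $\mathcal Y$ is adjacent to $0$, $\frac12|\mathcal X|$ or $|\mathcal X|$ vertices of $\mathcal X$. The graph $\Gamma_s$ has the same vertex set as $\Gamma$ and the same edges, except that for each vertex $R\in\mathcal Y_s$ having exactly $\frac12|\mathcal X_s|$ neighbours in $\mathcal X_s$ (in $\Gamma$), those edges are deleted and $R$ is joined instead to the other $\frac12|\mathcal X_s|$ vertices of $\mathcal X_s$. *)

From HB Require Import structures.
From mathcomp Require Import all_boot all_order all_algebra.
Set Implicit Arguments. Unset Strict Implicit. Unset Printing Implicit Defensive.
Import GRing.Theory.
Local Open Scope ring_scope.

(* Vectors of V(n+1,2); since the field is GF(2), each point of PG(n,2) has a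
   unique nonzero representative, so points of PG(n,2) = nonzero vectors. *)
Notation vec n := 'rV['F_2]_(n.+1).

Section Quadric.
Variable n : nat.
Variable A : 'M['F_2]_(n.+1).

Definition qform (x : vec n) : 'F_2 := (x *m A *m x^T) 0 0.

Definition polar (x y : vec n) : 'F_2 := qform (x + y) - qform x - qform y.

Definition nonsingular : Prop :=
  forall x : vec n, x != 0 -> qform x = 0 -> exists y : vec n, polar x y != 0.

Definition in_quadric (S : 'M['F_2]_(n.+1)) : bool :=
  [forall u : vec n, (u <= S)%MS ==> (qform u == 0)].

(* projective index g : max dimension (rank - 1) of a subspace contained in Q *)
Definition proj_index (g : nat) : Prop :=
  (exists S : 'M['F_2]_(n.+1), in_quadric S /\ \rank S = g.+1) /\
  (forall S : 'M['F_2]_(n.+1), in_quadric S -> (\rank S <= g.+1)%N).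

Definition qpoints : {set vec n} := [set x | (x != 0) && (qform x == 0)].

(* point graph: distinct points adjacent iff the line joining them lies in Q *)
Definition qadj : rel (vec n) := fun x y =>
  [&& x \in qpoints, y \in qpoints, x != y & in_quadric (x + y)%MS].

Definition Xs (alpha : 'M['F_2]_(n.+1)) : {set vec n} :=
  [set x in qpoints | ~~ (x <= alpha)%MS && in_quadric (alpha + x)%MS].
Definition Ys (alpha : 'M['F_2]_(n.+1)) : {set vec n} :=
  qpoints :\: Xs alpha.

End Quadric.

Section Graphs.
Variable T : finType.

Definition GM_partition (V : {set T}) (E : rel T) (X Y : {set T}) : Prop :=
  [/\ X :|: Y = V, X :&: Y = set0,
      exists k : nat, forall x, x \in X -> #|[set y in X | E x y]| = k &
      forall y, y \in Y ->
        let c := #|[set x in X | E y x]| in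
        [\/ c = 0%N, c.*2 = #|X| | c = #|X| ] ].

Definition half_vertex (E : rel T) (X Y : {set T}) (r : T) : bool :=
  (r \in Y) && (#|[set x in X | E r x]|.*2 == #|X|).

Definition GM_switch (E : rel T) (X Y : {set T}) : rel T := fun u v =>
  if (half_vertex E X Y u && (v \in X)) || (half_vertex E X Y v && (u \in X))
  then ~~ E u v else E u v.

Definition srg (V : {set T}) (E : rel T) (v k lam mu : nat) : Prop :=
  [/\ #|V| = v,
      forall x, x \in V -> #|[set y in V | E x y]| = k &
      forall x y, x \in V -> y \in V -> x != y ->
        #|[set z in V | E x z && E y z]| = (if E x y then lam else mu)].

End Graphs.

From HB Require Import structures.
From mathcomp Require Import all_boot all_order all_algebra.
From mathcomp Require Import zify ring lra.
Import GRing.Theory Num.Theory.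
Set Implicit Arguments. Unset Strict Implicit. Unset Printing Implicit Defensive.
Local Open Scope ring_scope.

(* Switching: let Q be (2/|X|) J - I on X * X and the identity elsewhere. Q is an
   involution fixing the identity and all-ones matrices of the vertex set, and the
   Godsil-McKay conditions say exactly that Q A Q is the adjacency matrix of the
   switched graph; so A^2 = k I + lam A + mu (J - I - A) is inherited by Q A Q.
   Quadric: over GF(2), if b(x, a) = 1 then translation by a swaps x^perp with its
   complement, and if x is singular then translation by x swaps singular and
   non-singular vectors outside x^perp. Non-singularity supplies such an a for each
   point x, and even one orthogonal to a totally singular S whenever S + x is
   totally singular. Counting with these involutions inside the spaces V, x^perp
   and alpha^perp gives the parameters of the point graph and the regularity of
   X_s; translation by a point of alpha not orthogonal to y shows that a point y
   of Y_s outside alpha sees half of X_s, while a point of alpha sees all of it. *)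

Section FunMatrix.
Variable T : finType.

Definition mxfun (f : T -> T -> rat) : 'M[rat]_#|T| :=
  \matrix_(i, j) f (enum_val i) (enum_val j).

Lemma eq_mxfun f g : f =2 g -> mxfun f = mxfun g.
Proof. by move=> fg; apply/matrixP => i j; rewrite !mxE fg. Qed.

Lemma mxfun_inj f g : mxfun f = mxfun g -> f =2 g.
Proof.
by move/matrixP => fg x y; have := fg (enum_rank x) (enum_rank y); rewrite !mxE !enum_rankK.
Qed.

Lemma mxfun_mul f g : mxfun f *m mxfun g = mxfun (fun x y => \sum_z f x z * g z y).
Proof.
apply/matrixP => i j; rewrite !mxE (big_enum_val (A := T)) /=.
by apply: eq_bigr => k _; rewrite !mxE.
Qed.

Lemma mxfun1 : 1%:M = mxfun (fun x y => (x == y)%:R).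
Proof. by apply/matrixP => i j; rewrite !mxE (inj_eq enum_val_inj). Qed.

Lemma mxfun_tr f : (mxfun f)^T = mxfun (fun x y => f y x).
Proof. by apply/matrixP => i j; rewrite !mxE. Qed.

End FunMatrix.

Lemma sum_eq_indicator (T : finType) (A : {pred T}) y :
  \sum_(z in A) ((z == y)%:R : rat) = (y \in A)%:R.
Proof.
have [yA | yNA] := boolP (y \in A).
  by rewrite (bigD1 y) //= eqxx big1 ?addr0 // => z /andP [_ /negbTE ->].
by rewrite big1 // => z zA; case: eqP => // zy; rewrite -zy zA in yNA.
Qed.

Lemma card_swap_halves (T : finType) (S B : {set T}) (f : T -> T) :
  {in S, forall v, f v \in S} -> {in S, involutive f} ->
  {in S, forall v, (f v \in B) = (v \notin B)} -> #|S| = (#|S :&: B|).*2.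
Proof.
move=> fS f_inv fB; rewrite -(cardsID B S).
have -> : S :\: B = f @: (S :&: B).
  apply/setP => v; rewrite !inE; apply/andP/imsetP => [[vNB vS] | [w]].
    by exists (f v); rewrite ?f_inv // !inE fS // fB // vNB.
  by rewrite !inE => /andP [wS wB] ->; rewrite fB // wB fS.
rewrite card_in_imset ?addnn // => u v.
by rewrite !inE => /andP [uS _] /andP [vS _] fuv; rewrite -(f_inv u uS) fuv f_inv.
Qed.

Section SrgMatrix.
Variables (T : finType) (V : {set T}).

Definition adj_mx (F : rel T) := mxfun (fun x y => (F x y)%:R).
Definition idmx_on := mxfun (fun x y => ((x == y) && (x \in V))%:R).
Definition jmx_on := mxfun (fun x y => ((x \in V) && (y \in V))%:R).

Lemma idmx_onMr f : mxfun f *m idmx_on = mxfun (fun x y => f x y * (y \in V)%:R).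
Proof.
rewrite mxfun_mul; apply: eq_mxfun => x y.
by rewrite (bigD1 y) //= eqxx big1 ?addr0 // => z /negbTE ->; rewrite mulr0.
Qed.

Lemma idmx_onMl f : idmx_on *m mxfun f = mxfun (fun x y => (x \in V)%:R * f x y).
Proof.
rewrite mxfun_mul; apply: eq_mxfun => x y.
rewrite (bigD1 x) //= eqxx big1 ?addr0 // => z.
by rewrite eq_sym => /negbTE ->; rewrite mul0r.
Qed.

Variable F : rel T.
Hypotheses (F_sym : symmetric F) (F_irr : irreflexive F) (F_V : forall x y, F x y -> x \in V).

Definition srg_mx (k l mu : nat) :=
  k%:R *: idmx_on + l%:R *: adj_mx F + mu%:R *: (jmx_on - idmx_on - adj_mx F).

Lemma adj_mx_sq : adj_mx F *m adj_mx F = mxfun (fun x y => #|[set z | F x z && F z y]|%:R).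
Proof.
rewrite mxfun_mul; apply: eq_mxfun => x y; rewrite -sum1_card natr_sum [RHS]big_mkcond.
by apply: eq_bigr => z _; rewrite inE; case: (F x z); case: (F z y); rewrite ?mul0r ?mul1r.
Qed.

Lemma card_common_nbrs x y : #|[set z | F x z && F z y]| =
  if (x \in V) && (y \in V) then #|[set z in V | F x z && F y z]| else 0%N.
Proof.
case: ifP => [/andP [xV yV] | xyNV]; last first.
  apply/eqP; rewrite cards_eq0; apply/eqP/setP => z; rewrite !inE.
  apply/negbTE; apply: contraFN xyNV => /andP [xz zy].
  by rewrite (F_V xz) (F_V (_ : F y z)) // F_sym.
apply: eq_card => z; rewrite !inE [F z y]F_sym [RHS]andb_idl // => /andP [xz _].
by rewrite (F_V (_ : F z x)) // F_sym.
Qed.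

Lemma srg_mxE k l mu : srg_mx k l mu = mxfun (fun x y =>
  (((x \in V) && (y \in V)) * (if x == y then k else if F x y then l else mu))%:R).
Proof.
apply/matrixP => i j; rewrite !mxE; move: (enum_val i) (enum_val j) => x y.
have [<- | xNy] := eqVneq x y; first by rewrite F_irr; case: (x \in V); rewrite /=; ring.
case Fxy: (F x y).
  have Fyx : F y x by rewrite F_sym.
  by rewrite (F_V Fxy) (F_V Fyx) /=; ring.
by case: (x \in V) (y \in V) => [] []; rewrite /=; ring.
Qed.

Lemma srg_mxP v k l mu : #|V| = v ->
  srg V F v k l mu <-> adj_mx F *m adj_mx F = srg_mx k l mu.
Proof.
move=> Vv; rewrite adj_mx_sq srg_mxE; split=> [[_ F_reg F_common] | F_sq].
  apply: eq_mxfun => x y; rewrite card_common_nbrs.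
  case: (boolP (x \in V)) => //= xV; case: (boolP (y \in V)) => //= yV; rewrite mul1n.
  have [<- | xNy] := eqVneq x y; last by rewrite F_common.
  by rewrite -(F_reg x xV); congr _%:R; apply: eq_card => z; rewrite !inE andbb.
split=> // [x xV | x y xV yV xNy].
  have /eqP := mxfun_inj F_sq x x; rewrite eqr_nat card_common_nbrs xV eqxx mul1n => /eqP <-.
  by apply: eq_card => z; rewrite !inE andbb.
have /eqP := mxfun_inj F_sq x y; rewrite eqr_nat card_common_nbrs xV yV (negbTE xNy) mul1n.
by move/eqP.
Qed.
End SrgMatrix.

Section GMSwitching.
Variables (T : finType) (V X Y : {set T}) (E : rel T).
Hypotheses (E_sym : symmetric E) (E_irr : irreflexive E) (E_V : forall x y, E x y -> x \in V).
Hypothesis GM : GM_partition V E X Y.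

Local Notation c := (2 / #|X|%:R : rat).

Definition gm_fun x y : rat :=
  (if (x \in X) && (y \in X) then c else 0) + (x == y)%:R * (if x \in X then -1 else 1).

Definition gm_mx := mxfun gm_fun.

Lemma gm_mx_tr : gm_mx^T = gm_mx.
Proof.
rewrite mxfun_tr; apply: eq_mxfun => x y; rewrite /gm_fun andbC eq_sym.
by have [->|] := eqVneq y x; rewrite ?mul0r.
Qed.

Lemma gm_mxMl g : gm_mx *m mxfun g =
  mxfun (fun x y => if x \in X then c * \sum_(z in X) g z y - g x y else g x y).
Proof.
rewrite mxfun_mul; apply: eq_mxfun => x y.
under eq_bigr do rewrite mulrDl.
have diag : \sum_z (x == z)%:R * (if x \in X then -1 else 1) * g z y =
    (if x \in X then -1 else 1) * g x y.
  rewrite (bigD1 x) //= eqxx mul1r big1 ?addr0 // => z zx.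
  by rewrite eq_sym (negbTE zx) !mul0r.
rewrite big_split /= diag.
case: (x \in X) => /=; last by rewrite big1 ?add0r ?mul1r // => z _; rewrite mul0r.
rewrite mulr_sumr [in RHS]big_mkcond mulN1r; congr (_ - _).
by apply: eq_bigr => z _; case: (z \in X); rewrite ?mul0r.
Qed.

Lemma gm_mxMr g : mxfun g *m gm_mx =
  mxfun (fun x y => if y \in X then c * \sum_(z in X) g x z - g x y else g x y).
Proof. by apply: trmx_inj; rewrite trmx_mul gm_mx_tr !mxfun_tr gm_mxMl. Qed.

Lemma X_sub_V : X \subset V.
Proof. by case: GM => <- _ _ _; apply: subsetUl. Qed.

Lemma Y_sub_V : Y \subset V.
Proof. by case: GM => <- _ _ _; apply: subsetUr. Qed.

Lemma X_notin_Y x : x \in X -> x \notin Y.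
Proof.
by case: GM => _ XY0 _ _ xX; apply/negP => xY; have := in_set0 x; rewrite -XY0 inE xX xY.
Qed.

Lemma gm_coef_card x : x \in X -> c * #|X|%:R = 2.
Proof. by move=> xX; rewrite divfK // pnatr_eq0 -lt0n; apply/card_gt0P; exists x. Qed.

Lemma gm_mx_sqr : gm_mx *m gm_mx = 1%:M.
Proof.
have sum_gm y : \sum_(z in X) gm_fun z y = if y \in X then c * #|X|%:R - 1 else 0.
  rewrite (eq_bigr (fun z => (if y \in X then c else 0) - (z == y)%:R)) => [|z zX]; last first.
    by rewrite /gm_fun zX mulrN1.
  rewrite sumrB sumr_const sum_eq_indicator.
  by case: (y \in X); rewrite ?mulr_natr ?mul0rn ?subr0.
rewrite gm_mxMl mxfun1; apply: eq_mxfun => x y; rewrite sum_gm /gm_fun.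
case xX: (x \in X); last by rewrite /= add0r mulr1.
case: ifP => yX /=; last first.
  by rewrite mulr0 !add0r; case: eqP => [xy | _]; [rewrite xy yX in xX | rewrite mul0r oppr0].
by rewrite (gm_coef_card xX); ring.
Qed.

Lemma gm_idmxC : gm_mx *m idmx_on V = idmx_on V *m gm_mx.
Proof.
rewrite idmx_onMr idmx_onMl; apply: eq_mxfun => x y; rewrite mulrC /gm_fun.
have [<- // | xNy] := eqVneq x y; rewrite mul0r addr0.
case: ifP => [/andP [/(subsetP X_sub_V) -> /(subsetP X_sub_V) ->] | _] //.
by rewrite !mulr0.
Qed.

Lemma gm_idmx : gm_mx *m idmx_on V *m gm_mx = idmx_on V.
Proof. by rewrite gm_idmxC -mulmxA gm_mx_sqr mulmx1. Qed.

Lemma gm_jmxMl : gm_mx *m jmx_on V = jmx_on V.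
Proof.
rewrite gm_mxMl; apply: eq_mxfun => x y; case: ifP => // xX.
under eq_bigr => z zX do rewrite (subsetP X_sub_V z zX).
rewrite sumr_const (subsetP X_sub_V x xX).
by case: (y \in V); rewrite /= ?mul0rn ?mulr0 // mulr1n (gm_coef_card xX) addrK.
Qed.

Lemma gm_jmx : gm_mx *m jmx_on V *m gm_mx = jmx_on V.
Proof.
have jmx_tr : (jmx_on V)^T = jmx_on V.
  by rewrite mxfun_tr; apply: eq_mxfun => x y; rewrite andbC.
by rewrite gm_jmxMl -[LHS]trmxK trmx_mul gm_mx_tr jmx_tr gm_jmxMl jmx_tr.
Qed.

Lemma GM_switch_sym : symmetric (GM_switch E X Y).
Proof. by move=> u v; rewrite /GM_switch orbC E_sym. Qed.

Lemma gm_side u v : u \notin X -> v \in X ->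
  c * #|[set z in X | E u z]|%:R - (E u v)%:R = (GM_switch E X Y u v)%:R.
Proof.
move=> uNX vX; have X_gt0 : (0 < #|X|)%N by apply/card_gt0P; exists v.
rewrite /GM_switch /half_vertex vX (negbTE (X_notin_Y vX)) (negbTE uNX) !andbF orbF andbT.
have [uY | uNY] := boolP (u \in Y); last first.
  have uNV : u \notin V by case: GM => <- _ _ _; rewrite inE negb_or uNX.
  have -> : [set z in X | E u z] = set0.
    apply/setP => z; rewrite !inE; apply/negbTE/negP => /andP [_ /E_V uV].
    by rewrite uV in uNV.
  by rewrite (negbTE (contra (@E_V u v) uNV)) cards0 mulr0 subrr.
case: GM => _ _ _ /(_ u uY) /= [c0 | c_half | c_all].
- have Euv : E u v = false.
    apply/negbTE/negP => Euv; suff : v \in [set z in X | E u z] by rewrite (cards0_eq c0) inE.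
    by rewrite inE vX.
  by rewrite c0 Euv mulr0 subrr double0 eq_sym (gtn_eqF X_gt0).
- rewrite c_half eqxx /=.
  have : c * (#|[set z in X | E u z]|.*2)%:R = 2 by rewrite c_half (gm_coef_card vX).
  rewrite -addnn natrD mulrDr => c_half_eq.
  have -> : c * #|[set z in X | E u z]|%:R = 1 by lra.
  by case: (E u v).
- have Euv : E u v.
    have sub : [set z in X | E u z] \subset X by apply/subsetP => z; rewrite inE => /andP [].
    have : v \in [set z in X | E u z] by rewrite (elimT (subset_cardP c_all) sub).
    by rewrite inE vX.
  rewrite c_all Euv (gm_coef_card vX) /=.
  have -> : (#|X|.*2 == #|X|) = false by apply/negbTE/eqP; rewrite -muln2; lia.
  by rewrite /=; ring.
Qed.

Lemma gm_adj : gm_mx *m adj_mx E *m gm_mx = adj_mx (GM_switch E X Y).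
Proof.
have [_ _ [kX X_reg] _] := GM.
have sum_adj z : \sum_(w in X) (E z w)%:R = #|[set w in X | E z w]|%:R :> rat.
  rewrite -sum1_card natr_sum [RHS]big_mkcond [LHS]big_mkcond; apply: eq_bigr => w _.
  by rewrite inE; case: (w \in X) (E z w) => [] [].
have sum_adjC z : \sum_(w in X) (E w z)%:R = #|[set w in X | E z w]|%:R :> rat.
  by rewrite -sum_adj; apply: eq_bigr => w _; rewrite E_sym.
rewrite /adj_mx gm_mxMl gm_mxMr; apply: eq_mxfun => x y.
case xX: (x \in X); case yX: (y \in X) => /=.
- under eq_bigr => z zX do rewrite sum_adjC X_reg //.
  rewrite sumrB sumr_const sum_adjC sum_adj !X_reg // -mulrnAr -[kX%:R *+ _]mulr_natr.
  rewrite [_ * (kX%:R * _)]mulrCA (gm_coef_card xX).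
  rewrite /GM_switch /half_vertex !(negbTE (X_notin_Y _)) //=; ring.
- by rewrite sum_adjC E_sym (gm_side (negbT yX) xX) GM_switch_sym.
- by rewrite sum_adj (gm_side (negbT xX) yX).
- by rewrite /GM_switch xX yX !andbF.
Qed.

Lemma GM_switch_irr : irreflexive (GM_switch E X Y).
Proof.
move=> x; rewrite /GM_switch orbb E_irr /half_vertex.
by case xX: (x \in X); rewrite ?andbF ?(negbTE (X_notin_Y xX)).
Qed.

Lemma GM_switch_V x y : GM_switch E X Y x y -> x \in V.
Proof.
rewrite /GM_switch /half_vertex; case: ifP => [| _ /E_V //].
by case/orP => [/andP [/andP [/(subsetP Y_sub_V) ->]] | /andP [_ /(subsetP X_sub_V) ->]].
Qed.

Theorem GM_switch_srg v k l mu : srg V E v k l mu -> srg V (GM_switch E X Y) v k l mu.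
Proof.
move=> E_srg; have [Vv _ _] := E_srg.
move/(srg_mxP E_sym E_irr E_V k l mu Vv): E_srg => E_sq.
apply/(srg_mxP GM_switch_sym GM_switch_irr GM_switch_V k l mu Vv).
have conj_sq : gm_mx *m adj_mx E *m gm_mx *m (gm_mx *m adj_mx E *m gm_mx) =
               gm_mx *m (adj_mx E *m adj_mx E) *m gm_mx.
  by rewrite !mulmxA -(mulmxA _ gm_mx gm_mx) gm_mx_sqr mulmx1.
rewrite -gm_adj conj_sq E_sq /srg_mx !mulmxDr !mulmxDl -!scalemxAr -!scalemxAl.
by rewrite !mulmxBr !mulmxBl gm_idmx gm_jmx gm_adj.
Qed.
End GMSwitching.

Lemma F2_neq0 (a : 'F_2) : (a != 0) = (a == 1).
Proof. by case: a => -[|[|[]]]. Qed.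

Lemma F2_addr1_eq0 (a : 'F_2) : (a + 1 == 0) = (a != 0).
Proof. by case: a => -[|[|[]]]. Qed.

Lemma F2_addrr (a : 'F_2) : a + a = 0.
Proof. exact/addrr_pchar2/pchar_Fp. Qed.

Lemma F2mx_addrr m k (M : 'M['F_2]_(m, k)) : M + M = 0.
Proof. by apply/matrixP => i j; rewrite !mxE F2_addrr. Qed.

Lemma F2mx_addrK m k (M N : 'M['F_2]_(m, k)) : M + N + N = M.
Proof. by rewrite -addrA F2mx_addrr addr0. Qed.

Lemma F2_submx_row n (x y : vec n) : (y <= x)%MS -> (y == 0) || (y == x).
Proof.
case/sub_rVP => c ->; case: (eqVneq c 0) => [->|]; first by rewrite scale0r eqxx.
by rewrite F2_neq0 => /eqP ->; rewrite scale1r eqxx orbT.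
Qed.

Definition polar_mx n (A : 'M['F_2]_n.+1) := A + A^T.

(* Locked: rewriting would otherwise try to convert distinct unfolded instances,
   which takes seconds each. *)
HB.lock Definition qortho n (A : 'M['F_2]_n.+1) m (S : 'M_(m, n.+1)) (y : vec n) :=
  S *m polar_mx A *m y^T == 0.

Section PolarSpace.
Variables (n : nat) (A : 'M['F_2]_n.+1).
Local Notation Q := (qform A).

Lemma qform0 : Q 0 = 0.
Proof. by rewrite /qform !mul0mx mxE. Qed.

Lemma qformD x y : Q (x + y) = Q x + Q y + polar A x y.
Proof. by rewrite /polar -[_ - Q x - _]addrA -opprD [RHS]addrC subrK. Qed.

Lemma polarC x y : polar A x y = polar A y x.
Proof. by rewrite /polar [x + y]addrC addrAC. Qed.

Lemma polarxx x : polar A x x = 0.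
Proof. by rewrite /polar (F2mx_addrr x) qform0 sub0r -opprD F2_addrr oppr0. Qed.

Lemma polarE x y : polar A x y = (x *m polar_mx A *m y^T) 0 0.
Proof.
have yAx : (y *m A *m x^T) 0 0 = (x *m A^T *m y^T) 0 0.
  by rewrite -[x *m A^T *m y^T]trmxK [RHS]mxE !trmx_mul !trmxK mulmxA.
rewrite /polar /qform /polar_mx linearD /= !(mulmxDl, mulmxDr) ![(_ + _ : 'M_1) 0 0]mxE yAx.
ring.
Qed.

Lemma polarDr (x y z : vec n) : polar A x (y + z) = polar A x y + polar A x z.
Proof. by rewrite !polarE [(y + z)^T]linearD /= mulmxDr mxE. Qed.

Lemma polarx0 x : polar A x 0 = 0.
Proof. by rewrite polarE trmx0 mulmx0 mxE. Qed.

Lemma qorthoE m (S : 'M_(m, n.+1)) y : qortho A S y = (S *m polar_mx A *m y^T == 0).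
Proof. by rewrite qortho.unlock. Qed.

Definition qperp m (S : 'M_(m, n.+1)) := [set y | qortho A S y].

Lemma qorthoP m (S : 'M_(m, n.+1)) y :
  reflect (forall i, polar A (row i S) y = 0) (qortho A S y).
Proof.
rewrite qorthoE; apply: (iffP eqP) => [S_y i|S_y].
  by rewrite polarE -!row_mul S_y row0 mxE.
apply/matrixP => i j; rewrite (ord1 j) [RHS]mxE.
by have := S_y i; rewrite polarE -!row_mul mxE.
Qed.

Lemma qortho_rowE (x y : vec n) : qortho A x y = (polar A x y == 0).
Proof.
rewrite qorthoE polarE; apply/eqP/eqP => [->|xy]; first by rewrite mxE.
by rewrite [LHS]mx11_scalar xy raddf0.
Qed.

Lemma qorthoD m (S : 'M_(m, n.+1)) u v : qortho A S u -> qortho A S v -> qortho A S (u + v).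
Proof. by move=> /qorthoP Su /qorthoP Sv; apply/qorthoP => i; rewrite polarDr Su Sv addr0. Qed.

Lemma qortho_polar_submx m (S : 'M_(m, n.+1)) u y :
  qortho A S y -> (u <= S)%MS -> polar A u y = 0.
Proof.
rewrite qorthoE => /eqP S_y /submxP [t ->]; rewrite polarE.
have -> : t *m S *m polar_mx A *m y^T = t *m (S *m polar_mx A *m y^T) by rewrite !mulmxA.
by rewrite S_y mulmx0 mxE.
Qed.

Lemma qortho_submx m (S : 'M_(m, n.+1)) y v : qortho A S y -> (v <= y)%MS -> qortho A S v.
Proof.
by rewrite !qorthoE => /eqP Sy /sub_rVP [a ->]; rewrite linearZ /= -scalemxAr Sy scaler0.
Qed.

Lemma qformZ a x : Q (a *: x) = a ^+ 2 * Q x.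
Proof. by rewrite /qform linearZ /= -scalemxAr -!scalemxAl !mxE mulrA. Qed.

Definition totally_singular m (S : 'M_(m, n.+1)) := forall u, (u <= S)%MS -> Q u = 0.

Lemma in_quadricP (S : 'M_n.+1) : reflect (totally_singular S) (in_quadric A S).
Proof.
apply: (iffP forallP) => [S_sing u uS | S_sing u]; first exact/eqP/(implyP (S_sing u)).
by apply/implyP => /S_sing ->.
Qed.

Lemma totally_singular_row x : Q x = 0 -> totally_singular x.
Proof. by move=> Qx u /sub_rVP [a ->]; rewrite qformZ Qx mulr0. Qed.

Lemma totally_singular_qortho m (S : 'M_(m, n.+1)) u :
  totally_singular S -> (u <= S)%MS -> qortho A S u.
Proof.
move=> S_sing uS; apply/qorthoP => i.
have iS : (row i S <= S)%MS := row_sub i S.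
by have := S_sing _ (addmx_sub iS uS); rewrite qformD !S_sing // !add0r.
Qed.

Lemma in_quadric_addsmx m (S : 'M_(m, n.+1)) x : totally_singular S ->
  in_quadric A (S + x)%MS = (Q x == 0) && qortho A S x.
Proof.
move=> S_sing; apply/in_quadricP/andP => [Sx_sing | [/eqP Qx Sx] u].
  have Qx : Q x = 0 := Sx_sing x (addsmxSr S x).
  split; first exact/eqP.
  apply/qorthoP => i; have iS : (row i S <= S + x)%MS := submx_trans (row_sub i S) (addsmxSl S x).
  by have := Sx_sing _ (addmx_sub iS (addsmxSr S x)); rewrite qformD Qx S_sing ?row_sub // !add0r.
case/sub_addsmxP => -[s v] /= ->.
rewrite qformD S_sing ?submxMl // (totally_singular_row Qx) ?submxMl //.
by rewrite (qortho_polar_submx (qortho_submx Sx (submxMl v x))) ?submxMl // !add0r.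
Qed.

(* Otherwise [x *m polar_mx A] lies in the row space of [S *m polar_mx A], and then
   [x - t *m S] is a nonzero singular vector orthogonal to everything. *)
Lemma exists_polar1 m (S : 'M_(m, n.+1)) x : nonsingular A ->
  in_quadric A (S + x)%MS -> ~~ (x <= S)%MS -> exists2 a, qortho A S a & polar A x a = 1.
Proof.
move=> NS Sx_sing xNS.
have [/exists_inP [a] | no_a] := boolP [exists a in qperp S, polar A x a == 1].
  by rewrite inE => Sa /eqP xa; exists a.
have x_perp a : qortho A S a -> polar A x a = 0.
  move=> Sa; apply/eqP; rewrite -[_ == 0]negbK F2_neq0.
  by apply: contra no_a => xa; apply/exists_inP; exists a; rewrite ?inE.
have /submxP [t xC] : (x *m polar_mx A <= S *m polar_mx A)%MS.
  rewrite submxE; apply/eqP/matrixP => i j; rewrite (ord1 i) [RHS]mxE.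
  have Sa : qortho A S (col j (cokermx (S *m polar_mx A)))^T.
    by rewrite qorthoE trmxK !colE mulmxA mulmx_coker mul0mx.
  by have := x_perp _ Sa; rewrite polarE trmxK colE mulmxA -colE mxE.
pose u := x - t *m S.
have u_neq0 : u != 0 by apply: contra xNS; rewrite subr_eq0 => /eqP ->; apply: submxMl.
have Qu : Q u = 0.
  apply: (in_quadricP _ Sx_sing); apply/sub_addsmxP.
  by exists (- t, 1%:M); rewrite /= mul1mx mulNmx addrC.
have [y] := NS u u_neq0 Qu.
by rewrite polarE mulmxBl xC mulmxA subrr mul0mx mxE eqxx.
Qed.
End PolarSpace.

Section PolarCounting.
Variables (n : nat) (A : 'M['F_2]_n.+1).
Local Notation Q := (qform A).

Definition qsing := [set v : vec n | Q v == 0].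

Lemma in_qperp_row (x y : vec n) : (y \in qperp A x) = (polar A x y == 0).
Proof. by rewrite inE qortho_rowE. Qed.

Lemma card_qperp_half (W : {set vec n}) x a :
  {in W, forall v, v + a \in W} -> polar A x a = 1 -> #|W| = (#|W :&: qperp A x|).*2.
Proof.
move=> Wa xa; apply: (card_swap_halves Wa) => [v _ | v _]; first exact: F2mx_addrK.
by rewrite !in_qperp_row polarDr xa F2_addr1_eq0.
Qed.

Lemma card_qsing_qperp (W : {set vec n}) x a : {in W &, forall u v, u + v \in W} ->
  x \in W -> Q x = 0 -> a \in W -> polar A x a = 1 ->
  (4 * #|W :&: qsing| = 4 * #|W :&: qperp A x :&: qsing| + #|W|)%N.
Proof.
move=> W_add xW Qx aW xa.
have W_half := card_qperp_half (fun v vW => W_add v a vW aW) xa.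
have Wx_half : #|W :\: qperp A x| = (#|(W :\: qperp A x) :&: qsing|).*2.
  apply: (@card_swap_halves _ _ _ (+%R^~ x)) => [v | v _ | v];
    rewrite ?F2mx_addrK // !(in_setD, in_setI, in_qperp_row) ?inE.
    by rewrite polarDr polarxx addr0 => /andP [-> /W_add ->].
  rewrite F2_neq0 => /andP [/eqP xv _].
  by rewrite qformD Qx addr0 polarC xv F2_addr1_eq0.
have W_split : #|W :&: qperp A x| + #|W :\: qperp A x| = #|W| := cardsID _ _.
have sing_split : #|W :&: qperp A x :&: qsing| + #|(W :\: qperp A x) :&: qsing| = #|W :&: qsing|.
  by rewrite setIDAC setIAC; apply: cardsID.
move: W_half Wx_half; rewrite -!muln2; lia.
Qed.

Lemma card_qperp_qsing_half x y : Q x = 0 -> polar A y x = 1 ->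
  #|qperp A x :&: qsing| = (#|qperp A x :&: qperp A y :&: qsing|).*2.
Proof.
move=> Qx yx; rewrite setIAC; apply: card_qperp_half yx => v.
rewrite !inE !qortho_rowE => /andP [/eqP xv /eqP Qv].
by rewrite polarDr xv polarxx qformD Qv Qx polarC xv !addr0.
Qed.
End PolarCounting.

Section PointGraph.
Variables (n : nat) (A : 'M['F_2]_n.+1).
Local Notation Q := (qform A).
Local Notation P := (qpoints A).
Local Notation qperp := (qperp A).
Local Notation qsing := (qsing A).

Lemma qpointsE x : (x \in P) = (x != 0) && (Q x == 0).
Proof. by rewrite inE. Qed.

Lemma qpoint_sing x : x \in P -> Q x = 0.
Proof. by rewrite qpointsE => /andP [_ /eqP]. Qed.

Lemma qadjE x y : x \in P -> qadj A x y = [&& y \in P, x != y & y \in qperp x].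
Proof.
move=> xP; rewrite /qadj xP in_quadric_addsmx; last exact/totally_singular_row/qpoint_sing.
by rewrite qpointsE inE; case: (y != 0); case: (Q y == 0).
Qed.

Lemma qadj_sym : symmetric (qadj A).
Proof.
move=> x y; case xP: (x \in P); last by rewrite /qadj xP andbF.
case yP: (y \in P); last by rewrite /qadj yP andbF.
by rewrite (qadjE y xP) (qadjE x yP) xP yP eq_sym !in_qperp_row polarC.
Qed.

Lemma qadj_irr : irreflexive (qadj A).
Proof. by move=> x; rewrite /qadj eqxx !andbF. Qed.

Lemma qadj_qpoint x y : qadj A x y -> x \in P.
Proof. by case/and4P. Qed.

Lemma common_nbhdE x y : x \in P -> y \in P ->
  [set z in P | qadj A x z && qadj A y z] = qperp x :&: qperp y :&: qsing :\ 0 :\ x :\ y.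
Proof.
move=> xP yP; apply/setP => z; rewrite in_set (qadjE z xP) (qadjE z yP) !inE ![_ == z]eq_sym.
by case: (z == 0) (z == x) (z == y) (Q z == 0) (qortho A x z) (qortho A y z) => [] [] [] [] [] [].
Qed.

Lemma card_common_nbhd x y : x \in P -> y \in P ->
  #|[set z in P | qadj A x z && qadj A y z]| = (#|qperp x :&: qperp y :&: qsing|
    - 1 - (polar A x y == 0%R) - ((x != y) && (polar A x y == 0%R)))%N.
Proof.
move=> xP yP; have [x0 y0] : x != 0 /\ y != 0.
  by rewrite !qpointsE in xP yP; case/andP: xP; case/andP: yP.
rewrite (common_nbhdE xP yP) [in RHS](cardsD1 0) [#|_ :\ 0|](cardsD1 x) [#|_ :\ x|](cardsD1 y) !inE.
rewrite !qortho_rowE !polarx0 qform0 !polarxx (qpoint_sing xP) (qpoint_sing yP) x0 y0.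
by rewrite [y == x]eq_sym [polar A y x]polarC !eqxx /= !andbT !addKn.
Qed.

Lemma card_nbhd x : x \in P -> #|[set y in P | qadj A x y]| = (#|qperp x :&: qsing| - 2)%N.
Proof.
move=> xP; have -> : [set y in P | qadj A x y] = [set z in P | qadj A x z && qadj A x z].
  by apply/setP => z; rewrite !inE andbb.
by rewrite card_common_nbhd // polarxx !eqxx /= setIid subn0 -subnDA.
Qed.

Lemma card_common_nbhd_adj x y : x \in P -> qadj A x y ->
  #|[set z in P | qadj A x z && qadj A y z]| = (#|qperp x :&: qperp y :&: qsing| - 3)%N.
Proof.
move=> xP xy; move: (xy); rewrite (qadjE y xP) in_qperp_row => /and3P [yP xNy /eqP xy0].
by rewrite card_common_nbhd // xy0 xNy eqxx -!subnDA.
Qed.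

Lemma card_common_nbhd_nonadj x y : x \in P -> y \in P -> x != y -> ~~ qadj A x y ->
  #|[set z in P | qadj A x z && qadj A y z]| = (#|qperp x :&: qperp y :&: qsing| - 1)%N.
Proof.
move=> xP yP xNy; rewrite (qadjE y xP) yP xNy in_qperp_row /= => /negbTE xy.
by rewrite card_common_nbhd // xy andbF !subn0.
Qed.

Hypothesis NS : nonsingular A.

Lemma exists_polar1_qpoint x : x \in P -> exists a, polar A x a = 1.
Proof.
rewrite qpointsE => /andP [x0 /eqP Qx].
by have [a] := NS x0 Qx; rewrite F2_neq0 => /eqP; exists a.
Qed.

Lemma card_qperp_qpoint x : x \in P -> #|[set: vec n]| = (#|qperp x|).*2.
Proof.
move=> xP; have [a xa] := exists_polar1_qpoint xP.
by rewrite (card_qperp_half (fun v _ => in_setT (v + a)) xa) setTI.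
Qed.

Lemma card_qperp_qsing_qpoint x : x \in P ->
  #|qperp x :&: qsing| = (#|qsing| - #|[set: vec n]| %/ 4)%N.
Proof.
move=> xP; have [a xa] := exists_polar1_qpoint xP.
have : (4 * #|qsing| = 4 * #|qperp x :&: qsing| + #|[set: vec n]|)%N.
  have W_add : {in [set: vec n] &, forall u v, u + v \in [set: vec n]} by move=> u v; rewrite !inE.
  have := card_qsing_qperp W_add (in_setT x) (qpoint_sing xP) (in_setT a) xa.
  by rewrite !setTI.
lia.
Qed.

Lemma card_qperp2_qsing_adj x y : x \in P -> qadj A x y ->
  #|qperp x :&: qperp y :&: qsing| = (#|qperp x :&: qsing| - #|[set: vec n]| %/ 8)%N.
Proof.
move=> xP xy; have /and4P [_ yP xNy xy_sing] := xy.
have yNx : ~~ (y <= x)%MS.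
  apply/negP => /F2_submx_row /orP [/eqP y0 | /eqP yx]; last by rewrite yx eqxx in xNy.
  by rewrite y0 qpointsE eqxx in yP.
have [a xa ya] := exists_polar1 NS xy_sing yNx.
have : (4 * #|qperp x :&: qsing| = 4 * #|qperp x :&: qperp y :&: qsing| + #|qperp x|)%N.
  apply: (card_qsing_qperp (W := qperp x)) (qpoint_sing yP) _ ya.
  - by move=> u v; rewrite !inE; apply: qorthoD.
  - by move: xy; rewrite (qadjE y xP) => /and3P [].
  - by rewrite inE.
have : #|[set: vec n]| = (#|qperp x| * 2)%N by rewrite muln2; apply: card_qperp_qpoint.
lia.
Qed.

Lemma card_qperp2_qsing_nonadj x y : x \in P -> y \in P -> x != y -> ~~ qadj A x y ->
  #|qperp x :&: qperp y :&: qsing| = (#|qperp x :&: qsing| %/ 2)%N.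
Proof.
move=> xP yP xNy; rewrite (qadjE y xP) yP xNy in_qperp_row F2_neq0 polarC => /eqP yx.
by rewrite (card_qperp_qsing_half (qpoint_sing xP) yx) -muln2 mulnK.
Qed.

(* [q] counts the singular vectors orthogonal to a point, [0] included. *)
Lemma qadj_srg : let N := #|[set: vec n]| in let q := (#|qsing| - N %/ 4)%N in
  srg P (qadj A) #|P| (q - 2) (q - N %/ 8 - 3) (q %/ 2 - 1).
Proof.
move=> N q; split=> // [x xP | x y xP yP xNy].
  by rewrite card_nbhd // card_qperp_qsing_qpoint.
case: ifP => [xy | /negbT nxy].
  by rewrite card_common_nbhd_adj // card_qperp2_qsing_adj // card_qperp_qsing_qpoint.
by rewrite card_common_nbhd_nonadj // card_qperp2_qsing_nonadj // card_qperp_qsing_qpoint.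
Qed.
End PointGraph.

Section SwitchingSet.
Variables (n : nat) (A : 'M['F_2]_n.+1).
Hypothesis NS : nonsingular A.
Variable alpha : 'M['F_2]_n.+1.
Hypothesis alpha_sing : totally_singular A alpha.
Local Notation Q := (qform A).
Local Notation P := (qpoints A).
Local Notation X := (Xs A alpha).

Lemma XsE x : (x \in X) = [&& Q x == 0, ~~ (x <= alpha)%MS & qortho A alpha x].
Proof.
rewrite inE qpointsE in_quadric_addsmx //.
have [->|_] := eqVneq x 0; first by rewrite sub0mx /= !andbF.
by case: (Q x == 0) (x <= alpha)%MS (qortho A alpha x) => [] [] [].
Qed.

Lemma Xs_qpoint x : x \in X -> x \in P.
Proof. by case/setIdP. Qed.

Lemma Xs_addr x a : x \in X -> (a <= alpha)%MS -> x + a \in X.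
Proof.
rewrite !XsE => /and3P [/eqP Qx xNa xo] aa.
have ao : qortho A alpha a := totally_singular_qortho alpha_sing aa.
rewrite qformD Qx (alpha_sing aa) polarC (qortho_polar_submx xo aa).
rewrite !addr0 eqxx (qorthoD xo ao) andbT /=; apply: contra xNa => xaa.
by rewrite -(F2mx_addrK x a) addmx_sub.
Qed.

Lemma qadj_Xs x y : y \in P -> y \notin X -> x \in X -> qadj A y x = (polar A y x == 0).
Proof.
move=> yP yNX xX; rewrite (qadjE x yP) Xs_qpoint // in_qperp_row.
by have -> : y != x by apply: contraNneq yNX => ->.
Qed.

Lemma card_qperp2_qsing_Xs x : x \in X ->
  #|qperp A alpha :&: qperp A x :&: qsing A| =
  (#|qperp A alpha :&: qsing A| - #|qperp A alpha| %/ 4)%N.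
Proof.
move=> xX; have := xX; rewrite XsE => /and3P [_ xNa xo].
have alpha_x : in_quadric A (alpha + x)%MS by case/setIdP: xX => _ /andP [].
have [a ao xa] := exists_polar1 NS alpha_x xNa.
have : (4 * #|qperp A alpha :&: qsing A| =
        4 * #|qperp A alpha :&: qperp A x :&: qsing A| + #|qperp A alpha|)%N.
  apply: card_qsing_qperp (qpoint_sing (Xs_qpoint xX)) _ xa; rewrite ?inE //.
  by move=> u v; rewrite !inE; apply: qorthoD.
lia.
Qed.

Lemma card_Xs_nbhd x : x \in X -> #|[set y in X | qadj A x y]| =
  (#|qperp A alpha :&: qsing A| - #|qperp A alpha| %/ 4
     - #|[set u : vec n | (u <= alpha)%MS]| - 1)%N.
Proof.
move=> xX; have := xX; rewrite XsE => /and3P [/eqP Qx xNa xo].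
rewrite -(card_qperp2_qsing_Xs xX).
set B := qperp A alpha :&: qperp A x :&: qsing A; set span := [set u : vec n | (u <= alpha)%MS].
have -> : [set y in X | qadj A x y] = B :\: span :\ x.
  apply/setP => y; rewrite in_set XsE (qadjE y (Xs_qpoint xX)) !inE [x == y]eq_sym.
  have [->|_] := eqVneq y 0; first by rewrite sub0mx /= !andbF.
  by case: (y == x) (Q y == 0) (y <= alpha)%MS (qortho A alpha y) (qortho A x y) => [] [] [] [] [].
have spanB : span \subset B.
  apply/subsetP => u; rewrite !inE => ua.
  rewrite (totally_singular_qortho alpha_sing ua) qortho_rowE polarC.
  by rewrite (qortho_polar_submx xo ua) alpha_sing.
have xB : x \in B :\: span by rewrite !inE xNa xo qortho_rowE polarxx Qx eqxx.
by rewrite -(cardsDS spanB) [#|B :\: span|](cardsD1 x) xB add1n subn1.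
Qed.

Lemma Ys_nbhd_cases y : y \in Ys A alpha -> let c := #|[set x in X | qadj A y x]| in
  [\/ c = 0%N, c.*2 = #|X| | c = #|X|].
Proof.
rewrite in_setD => /andP [yNX yP].
have [ya | yNa] := boolP (y <= alpha)%MS.
  apply: Or33; apply: eq_card => x; rewrite inE andb_idr // => xX.
  have := xX; rewrite XsE => /and3P [_ _ xo].
  by rewrite qadj_Xs // (qortho_polar_submx xo ya).
have [i] : exists i, polar A (row i alpha) y != 0.
  apply/existsP; apply: contraR yNX => /existsPn no_i.
  rewrite XsE (qpoint_sing yP) eqxx yNa; apply/qorthoP => i.
  by apply/eqP; rewrite -[_ == 0]negbK no_i.
rewrite F2_neq0 polarC => /eqP yi.
apply: Or32; rewrite (card_qperp_half (fun x xX => Xs_addr xX (row_sub i alpha)) yi).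
congr _.*2; apply: eq_card => x; rewrite in_set in_setI.
by case xX: (x \in X); rewrite //= qadj_Xs // in_qperp_row.
Qed.

Lemma Xs_GM_partition : GM_partition P (qadj A) X (Ys A alpha).
Proof.
split.
- by apply/setP => v; rewrite in_setU in_setD; case: (boolP (v \in X)) => //= /Xs_qpoint ->.
- by apply/setP => v; rewrite in_setI in_setD in_set0; case: (v \in X).
- by eexists => x; apply: card_Xs_nbhd.
- exact: Ys_nbhd_cases.
Qed.
End SwitchingSet.

Theorem theorem3p3 (n : nat) (A : 'M['F_2]_(n.+1)) (g : nat) :
  nonsingular A -> proj_index A g -> (1 <= g)%N ->
  forall (s : nat) (alpha : 'M['F_2]_(n.+1)),
    (s < g)%N -> in_quadric A alpha -> \rank alpha = s.+1 ->
    GM_partition (qpoints A) (qadj A) (Xs A alpha) (Ys A alpha) /\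
    exists v k lam mu : nat,
      srg (qpoints A) (qadj A) v k lam mu /\
      srg (qpoints A) (GM_switch (qadj A) (Xs A alpha) (Ys A alpha)) v k lam mu.
Proof.
move=> NS _ _ _ alpha _ alpha_quad _.
have alpha_sing : totally_singular A alpha by apply/in_quadricP.
have GM := Xs_GM_partition NS alpha_sing.
split=> //; do 4!eexists; split; first exact: qadj_srg NS.
apply: (GM_switch_srg (qadj_sym A) (qadj_irr A) (@qadj_qpoint _ A) GM); exact: qadj_srg NS.
Qed.
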